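(* Let $(X,d,\mu)$ be a metric space with a Borel measure $\mu$ and fix $x\in X$. Suppose $\mathrm{vol}_\delta^x(l)<\infty$ for every $\delta>0$ and $l\in\mathbb N$, and that there is $\delta_0>0$ with $\limsup_{l\to\infty}\frac1l\log\mathrm{vol}_{\delta_0}^x(l)>0$. Then $h_\infty(X)=\infty$.
   Context: For $\delta>0$ a $\delta$-path is a sequence $(x_0,\dots,x_n)$ with $d(x_{i-1},x_i)\le\delta$; the $\delta$-component $[x]_\delta$ of $x$ is the set of points connected to $x$ by a $\delta$-path. For $x_0\in X$ and $n\in\mathbb N$, $B_\delta(x_0,n)=\{x_n\in X:\exists\ \delta\text{-path }(x_0,x_1,\dots,x_n)\}$. Define $\mathrm{vol}_\delta^x(l)=\sup_{x_0\in[x]_\delta}\mu(B_\delta(x_0,l))$. Coarse entropy $h_\infty(X)=\lim_{\delta\to\infty}\lim_{R\to\infty}\limsup_{n\to\infty}\frac1n\log s(n,R,\delta,x_0)$, where $s(n,R,\delta,x_0)$ is the supremum of cardinalities of $R$-separated sets of $\delta$-paths of length $n$ starting at $x_0$, paths compared by $\max_i d(x_i,y_i)$. *)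

From HB Require Import structures.
From mathcomp Require Import all_boot all_order all_algebra.
From mathcomp Require Import all_classical all_reals all_analysis.
Set Implicit Arguments. Unset Strict Implicit. Unset Printing Implicit Defensive.
Import Order.TTheory GRing.Theory Num.Theory.
Import numFieldNormedType.Exports.
Local Open Scope classical_set_scope.
Local Open Scope ring_scope.

Section CoarseDefs.
Variables (R : realType) (X : Type) (d : X -> X -> R).

Definition is_metric : Prop :=
  [/\ forall x y, d x y = 0 <-> x = y,
      forall x y, d x y = d y x &
      forall x y z, d x z <= d x y + d y z].

Definition dopen (A : set X) : Prop :=
  forall x, A x -> exists e : R, 0 < e /\ forall y, d x y < e -> A y.

Definition dpath (delta : R) (n : nat) (x0 : X) (p : 'I_n.+1 -> X) : Prop :=
  p ord0 = x0 /\
  forall i : nat, (i < n)%N -> d (p (inord i)) (p (inord i.+1)) <= delta.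

Definition dcomp (delta : R) (x : X) : set X :=
  [set y | exists n (p : 'I_n.+1 -> X), dpath delta x p /\ p ord_max = y].

Definition dball (delta : R) (x0 : X) (n : nat) : set X :=
  [set y | exists p : 'I_n.+1 -> X, dpath delta x0 p /\ p ord_max = y].

Definition pdist (n : nat) (p q : 'I_n.+1 -> X) : R :=
  \big[Num.max/0]_(i < n.+1) d (p i) (q i).

(* s(n, Rs, delta, x0): supremum of cardinalities of Rs-separated sets of
   delta-paths of length n starting at x0 (a finite such set of cardinality k
   is given by an enumeration P : 'I_k -> paths, pairwise Rs-separated) *)
Definition sep_count (n : nat) (Rs delta : R) (x0 : X) : \bar R :=
  ereal_sup [set (k%:R)%:E | k in [set k : nat |
    exists P : 'I_k -> ('I_n.+1 -> X),
      (forall i, dpath delta x0 (P i)) /\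
      (forall i j, i != j -> Rs < pdist (P i) (P j))]].

End CoarseDefs.

Definition elog (R : realType) (x : \bar R) : \bar R :=
  match x with
  | r%:E => if (0 < r)%R then (ln r)%:E else -oo
  | +oo => +oo
  | -oo => -oo
  end%E.

Definition vol (R : realType) (dsp : measure_display) (X : measurableType dsp)
  (d : X -> X -> R) (mu : {measure set X -> \bar R}) (delta : R) (x : X)
  (l : nat) : \bar R :=
  ereal_sup [set mu (dball d delta x0 l) | x0 in dcomp d delta x].

Definition coarse_entropy (R : realType) (X : Type) (d : X -> X -> R) (x0 : X)
  : \bar R :=
  lim ((lim ((limn_esup (fun n : nat =>
          ((n%:R)^-1)%:E * elog (sep_count d n Rs delta x0))%E)
       @[Rs --> +oo])) @[delta --> +oo]).

From Pilot Require Import Defs.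
From HB Require Import structures.
From mathcomp Require Import all_boot all_order all_algebra.
From mathcomp Require Import all_classical all_reals all_analysis.
From mathcomp Require Import zify ring lra.
Import Order.TTheory GRing.Theory Num.Theory.
Local Open Scope classical_set_scope.
Local Open Scope ring_scope.
Set Implicit Arguments. Unset Strict Implicit. Unset Printing Implicit Defensive.

(* Exponential growth of the [delta0]-balls forces, at every pair of scales
   [delta <= Rs], exponentially many [Rs]-separated [delta]-paths, with a rate
   growing linearly in [delta / delta0]. Fix [k] and [delta >= k * delta0].
   Keeping every [k]-th point of a [delta0]-path gives a [delta]-path about
   [k] times shorter, so B_delta(x0, l/k + 1) contains B_delta0(x0, l), of
   measure at least exp(h l). The endpoints of a maximal [Rs]-separated family
   of [delta]-paths of length [L = l/k + 1] are [Rs]-dense in that ball, and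
   each [Rs]-ball has measure at most vol_Rs(1), so the family has
   K >= exp(h l) / vol_Rs(1) members. Chaining [j] round trips along members
   of the family yields K^j separated paths of length about 2 L j, so the
   growth rate at scales (delta, Rs) is at least ln K / (8 L), i.e. about
   h k / 32. As [k] is arbitrary, the coarse entropy is infinite. *)

Section Paths.
Variables (R : realType) (X : Type) (d : X -> X -> R).
Hypothesis d_metric : is_metric d.

Lemma metric_dxx x : d x x = 0.
Proof. by case: d_metric => h _ _; apply/h. Qed.

Lemma metric_sym x y : d x y = d y x.
Proof. by case: d_metric. Qed.

Lemma metric_triangle x y z : d x z <= d x y + d y z.
Proof. by case: d_metric. Qed.

(* Paths are handled as maps [nat -> X] whose values past the length are
   irrelevant: concatenating, reversing and subsampling them then needs no
   ordinal casts. *)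
Definition npath (delta : R) (n : nat) (x0 : X) (f : nat -> X) :=
  f 0%N = x0 /\ forall i, (i < n)%N -> d (f i) (f i.+1) <= delta.

Definition path_of_fun n (f : nat -> X) : 'I_n.+1 -> X := fun i => f i.
Arguments path_of_fun : clear implicits.

Lemma npath_dpath delta n x0 f :
  npath delta n x0 f -> dpath d delta x0 (path_of_fun n f).
Proof.
move=> [f0 fS]; split => [//|i lt_in].
by rewrite /path_of_fun !inordK ?fS // ltnS ltnW.
Qed.

Lemma dpath_npath delta n x0 (p : 'I_n.+1 -> X) :
  dpath d delta x0 p -> npath delta n x0 (fun i => p (inord i)).
Proof.
move=> [p0 pS]; split => //.
by rewrite -p0; congr p; apply/val_inj; rewrite /= inordK.
Qed.

Lemma dballP delta x0 n y :
  dball d delta x0 n y <-> exists f, npath delta n x0 f /\ f n = y.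
Proof.
split => [[p [dp <-]]|[f [nf <-]]]; last by exists (path_of_fun n f); split;
  [exact: npath_dpath|].
exists (fun i => p (inord i)); split; first exact: dpath_npath.
by congr p; apply/val_inj; rewrite /= inordK.
Qed.

Lemma dcompP delta x0 y :
  Defs.dcomp d delta x0 y <-> exists n f, npath delta n x0 f /\ f n = y.
Proof.
split => [[n [p hp]]|[n /dballP [p hp]]]; last by exists n, p.
by exists n; apply/dballP; exists p.
Qed.

Lemma le_npath delta delta' n x0 f : delta <= delta' ->
  npath delta n x0 f -> npath delta' n x0 f.
Proof. by move=> le_dd [f0 fS]; split => // i /fS /le_trans; apply. Qed.

Definition path_cat N (f g : nat -> X) i :=
  if (i <= N)%N then f i else g (i - N)%N.

Lemma npath_cat delta N N' x0 f g :
  npath delta N x0 f -> npath delta N' (f N) g ->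
  npath delta (N + N') x0 (path_cat N f g).
Proof.
move=> [f0 fS] [g0 gS]; split => [|i lt_i]; first by rewrite /path_cat leq0n.
rewrite /path_cat; case: ifP => le_iN; case: ifP => le_SiN.
- by apply: fS; lia.
- have -> : i = N by lia.
  by rewrite subSnn -g0; apply: gS; lia.
- lia.
- have -> : (i.+1 - N = (i - N).+1)%N by lia.
  by apply: gS; lia.
Qed.

Lemma path_cat_end N N' f g : g 0%N = f N -> path_cat N f g (N + N') = g N'.
Proof.
rewrite /path_cat => g0; case: ifP => [le_N'0|_]; last by rewrite addKn.
have -> : N' = 0%N by lia.
by rewrite addn0.
Qed.

Lemma path_cat_left N f g i : (i <= N)%N -> path_cat N f g i = f i.
Proof. by rewrite /path_cat => ->. Qed.

Lemma dcomp_refl delta x : Defs.dcomp d delta x x.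
Proof. by apply/dcompP; exists 0%N, (fun=> x). Qed.

Lemma le_dcomp delta delta' x : delta <= delta' ->
  Defs.dcomp d delta x `<=` Defs.dcomp d delta' x.
Proof.
move=> le_dd y /dcompP [n [f [hf <-]]].
by apply/dcompP; exists n, f; split => //; exact: le_npath hf.
Qed.

Lemma dcomp_dpath_end delta x y L (p : 'I_L.+1 -> X) : Defs.dcomp d delta x y ->
  dpath d delta y p -> Defs.dcomp d delta x (p ord_max).
Proof.
move=> /dcompP [m [g [hg gm]]] /dpath_npath hp; apply/dcompP.
exists (m + L)%N, (path_cat m g (fun i => p (inord i))); split.
  by apply: npath_cat; rewrite // gm.
rewrite path_cat_end; last by case: hp => ->.
by congr p; apply/val_inj; rewrite /= inordK.
Qed.

Definition path_roundtrip L (g : nat -> X) i :=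
  if (i <= L)%N then g i else g (L + L - i)%N.

Lemma npath_roundtrip delta L y g :
  npath delta L y g -> npath delta (L + L) y (path_roundtrip L g).
Proof.
move=> [g0 gS]; split => [|i lt_i]; first by rewrite /path_roundtrip leq0n.
rewrite /path_roundtrip; case: ifP => le_iL; case: ifP => le_SiL.
- by apply: gS; lia.
- have -> : i = L by lia.
  have -> : (L + L - L.+1 = L.-1)%N by lia.
  have -> : g L = g L.-1.+1 by congr g; lia.
  by rewrite metric_sym; apply: gS; lia.
- lia.
- have -> : (L + L - i = (L + L - i.+1).+1)%N by lia.
  by rewrite metric_sym; apply: gS; lia.
Qed.

Lemma path_roundtrip_end L g : path_roundtrip L g (L + L) = g 0%N.
Proof.
rewrite /path_roundtrip; case: ifP => [le_LL_L|_]; last by rewrite subnn.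
by congr g; lia.
Qed.

Lemma path_roundtrip_left L g i : (i <= L)%N -> path_roundtrip L g i = g i.
Proof. by rewrite /path_roundtrip => ->. Qed.

Definition path_stop n (f : nat -> X) i := f (minn i n).

Lemma npath_stop delta n t x0 f : 0 <= delta -> npath delta n x0 f ->
  npath delta (n + t) x0 (path_stop n f).
Proof.
move=> delta_ge0 [f0 fS]; split => [|i _]; first by rewrite /path_stop min0n.
rewrite /path_stop; case: (boolP (i < n)%N) => lt_in.
  have [-> ->] : minn i n = i /\ minn i.+1 n = i.+1 by lia.
  exact: fS.
have [-> ->] : minn i n = n /\ minn i.+1 n = n by lia.
by rewrite metric_dxx.
Qed.

Lemma path_stop_left n f i : (i <= n)%N -> path_stop n f i = f i.
Proof. by rewrite /path_stop => /minn_idPl ->. Qed.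

Lemma npath_dist_le delta l x0 f : npath delta l x0 f ->
  forall a t, (a + t <= l)%N -> d (f a) (f (a + t)%N) <= t%:R * delta.
Proof.
move=> [_ fS] a; elim => [|t IH] le_atl; first by rewrite addn0 metric_dxx mul0r.
apply: le_trans (metric_triangle _ (f (a + t)%N) _) _.
rewrite addnS mulrSr mulrDl mul1r lerD ?IH ?fS //; lia.
Qed.

Lemma npath_subsample delta0 delta k l x0 f : (0 < k)%N -> 0 <= delta0 ->
  k%:R * delta0 <= delta -> npath delta0 l x0 f ->
  npath delta (l %/ k).+1 x0 (fun i => f (minn (k * i) l)) /\
  f (minn (k * (l %/ k).+1) l) = f l.
Proof.
move=> k_gt0 delta0_ge0 le_kd hf; split; last first.
  by congr f; have := ltn_ceil l k_gt0; rewrite mulnC; lia.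
split=> [|i _]; first by rewrite muln0 min0n; case: hf.
set a := minn (k * i) l; set b := minn (k * i.+1) l.
have -> : b = (a + (b - a))%N by rewrite /a /b; lia.
apply: le_trans (npath_dist_le hf _) _; first by rewrite /a /b; lia.
apply: le_trans le_kd; apply: ler_wpM2r => //; rewrite ler_nat /a /b; lia.
Qed.

Lemma dball_subsample delta0 delta k l x0 : (0 < k)%N -> 0 <= delta0 ->
  k%:R * delta0 <= delta ->
  dball d delta0 x0 l `<=` dball d delta x0 (l %/ k).+1.
Proof.
move=> k_gt0 delta0_ge0 le_kd y /dballP [f [hf <-]]; apply/dballP.
have [hf' f_end] := npath_subsample k_gt0 delta0_ge0 le_kd hf.
by exists (fun i => f (minn (k * i) l)).
Qed.

End Paths.
Arguments path_of_fun {X} n f _.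

Section SeparatedFamilies.
Variables (R : realType) (X : Type) (d : X -> X -> R).
Hypothesis d_metric : is_metric d.

Definition sep_family n Rs delta x0 K := exists P : 'I_K -> ('I_n.+1 -> X),
  (forall i, dpath d delta x0 (P i)) /\
  (forall i j, i != j -> Rs < pdist d (P i) (P j)).

Lemma sep_count_ge n Rs delta x0 K : sep_family n Rs delta x0 K ->
  ((K%:R)%:E <= sep_count d n Rs delta x0)%E.
Proof. by move=> h; apply: ereal_sup_ubound; exists K. Qed.

Lemma pdist_ge n (p q : 'I_n.+1 -> X) i : d (p i) (q i) <= pdist d p q.
Proof. exact: le_bigmax. Qed.

Lemma pdist_sym n (p q : 'I_n.+1 -> X) : pdist d p q = pdist d q p.
Proof. by apply: eq_bigr => i _; rewrite metric_sym. Qed.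

Lemma pdist_gtP n (p q : 'I_n.+1 -> X) Rs : 0 <= Rs ->
  Rs < pdist d p q -> exists i, Rs < d (p i) (q i).
Proof.
move=> Rs_ge0 lt_Rs; apply: contrapT => no_i; move: lt_Rs; apply/negP.
rewrite -leNgt; apply: bigmax_le => // i _.
by rewrite leNgt; apply/negP => lt_i; apply: no_i; exists i.
Qed.

Lemma sep_family_card (T : finType) n Rs delta x0 (P : T -> 'I_n.+1 -> X) :
  (forall a, dpath d delta x0 (P a)) ->
  (forall a b, a != b -> Rs < pdist d (P a) (P b)) ->
  sep_family n Rs delta x0 #|T|.
Proof.
move=> hP sepP; exists (fun i => P (enum_val i)); split => // i j ij.
by apply: sepP; apply: contra ij => /eqP /enum_val_inj ->.
Qed.

Definition nsep n Rs (f g : nat -> X) := exists t, (t <= n)%N /\ Rs < d (f t) (g t).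

Lemma sep_family_npath (T : finType) n Rs delta x0 (P : T -> nat -> X) :
  (forall a, npath d delta n x0 (P a)) ->
  (forall a b, a != b -> nsep n Rs (P a) (P b)) ->
  sep_family n Rs delta x0 #|T|.
Proof.
move=> hP sepP; apply: (sep_family_card (P := fun a => path_of_fun n (P a))).
  by move=> a; apply: npath_dpath.
move=> a b /sepP [t [le_tn lt_t]]; apply: lt_le_trans lt_t _.
by have := pdist_ge (path_of_fun n (P a)) (path_of_fun n (P b)) (inord t);
  rewrite /path_of_fun inordK.
Qed.

Lemma sep_familyP n Rs delta x0 K : 0 <= Rs -> sep_family n Rs delta x0 K ->
  exists B : 'I_K -> nat -> X, (forall b, npath d delta n x0 (B b)) /\
    (forall a b, a != b -> nsep n Rs (B a) (B b)).
Proof.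
move=> Rs_ge0 [P [hP sepP]]; exists (fun b t => P b (inord t)); split.
  by move=> b; apply: dpath_npath.
move=> a b /sepP /(pdist_gtP Rs_ge0) [i lt_i].
by exists i; rewrite -ltnS !inord_val.
Qed.

(* The families of [j] consecutive round trips: each word in [K^j] letters
   gives one path, and two words first differing at letter [i] give paths
   that are [Rs]-apart during the [i]-th excursion. *)
Lemma sep_roundtrips m L K (g : nat -> X) (B : 'I_K -> nat -> X) x y0 Rs delta :
  npath d delta m x g -> g m = y0 ->
  (forall b, npath d delta L y0 (B b)) ->
  (forall a b, a != b -> nsep L Rs (B a) (B b)) ->
  forall j, exists T : finType, #|T| = (K ^ j)%N /\ exists P : T -> nat -> X,
    (forall a, npath d delta (m + (L + L) * j) x (P a)) /\
    (forall a, P a (m + (L + L) * j)%N = y0) /\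
    (forall a b, a != b -> nsep (m + (L + L) * j) Rs (P a) (P b)).
Proof.
move=> hg gm hB sepB; elim => [|j [T [cardT [P [hP [P_end sepP]]]]]].
  exists unit; split; first by rewrite card_unit.
  by exists (fun=> g); rewrite muln0 addn0.
exists (T * 'I_K)%type; split; first by rewrite card_prod card_ord cardT expnSr.
set N := (m + (L + L) * j)%N.
have -> : (m + (L + L) * j.+1 = N + (L + L))%N by rewrite /N mulnS; lia.
have B0 b : B b 0%N = y0 by case: (hB b).
exists (fun ab => path_cat N (P ab.1) (path_roundtrip L (B ab.2))).
split; [|split].
- move=> [a b] /=; apply: npath_cat => //.
  by rewrite P_end; apply: npath_roundtrip => //; exact: hB.
- move=> [a b] /=; rewrite path_cat_end; first by rewrite path_roundtrip_end.
  by rewrite path_roundtrip_left // B0 P_end.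
- move=> [a b] [a' b'] /=; case: (eqVneq a a') => [<-|neq_aa'] neq_ab.
    have /sepB [t [le_tL lt_t]] : b != b' by apply: contra neq_ab => /eqP ->.
    exists (N + t)%N; split; first lia.
    by rewrite !path_cat_end ?path_roundtrip_left ?B0 ?P_end.
  have [t [le_tN lt_t]] := sepP _ _ neq_aa'.
  by exists t; split; [lia|rewrite !path_cat_left].
Qed.

Lemma sep_count_ge_pow m L K (g : nat -> X) (B : 'I_K -> nat -> X) x y0 Rs delta :
  0 <= delta ->
  npath d delta m x g -> g m = y0 ->
  (forall b, npath d delta L y0 (B b)) ->
  (forall a b, a != b -> nsep L Rs (B a) (B b)) ->
  forall n j, (m + (L + L) * j <= n)%N ->
  (((K ^ j)%N%:R)%:E <= sep_count d n Rs delta x)%E.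
Proof.
move=> delta_ge0 hg gm hB sepB n j le_n.
have [T [<- [P [hP [_ sepP]]]]] := sep_roundtrips hg gm hB sepB j.
apply: sep_count_ge; set N := (m + (L + L) * j)%N.
rewrite -(subnKC le_n) -/N.
apply: (sep_family_npath (P := fun a => path_stop N (P a))).
  by move=> a; apply: npath_stop.
move=> a b /sepP [t [le_tN lt_t]].
by exists t; split; [lia|rewrite !path_stop_left].
Qed.

End SeparatedFamilies.

Lemma maximal_or_all (P : nat -> Prop) :
  P 0%N -> (forall K, P K) \/ exists2 K, P K & ~ P K.+1.
Proof.
move=> P0; have [stable|] := pselect (forall K, P K -> P K.+1).
  by left; elim.
by move=> /existsNP [K /not_implyP [PK not_PSK]]; right; exists K.
Qed.

Section MaximalFamilies.
Variables (R : realType) (X : Type) (d : X -> X -> R).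
Hypothesis d_metric : is_metric d.

Lemma sep_family0 n Rs delta x0 : sep_family d n Rs delta x0 0.
Proof. by exists (fun i => path_of_fun n (fun=> x0)); split; case. Qed.

(* A path whose endpoint is far from all endpoints of the family is
   [Rs]-separated from every member, so it could be added to the family. *)
Lemma maximal_sep_family_cover n Rs delta y0 K (P : 'I_K -> 'I_n.+1 -> X) :
  (forall i, dpath d delta y0 (P i)) ->
  (forall i j, i != j -> Rs < pdist d (P i) (P j)) ->
  ~ sep_family d n Rs delta y0 K.+1 ->
  dball d delta y0 n `<=` \bigcup_b dball d Rs (P b ord_max) 1.
Proof.
move=> hP sepP not_sep y [q [hq <-]].
have [b not_sep_bq] : exists b, ~ Rs < pdist d (P b) q.
  apply: contrapT => no_b; apply: not_sep.
  have all_sep b : Rs < pdist d (P b) q.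
    by apply: contrapT => not_sep_b; apply: no_b; exists b.
  have := @sep_family_card _ _ d _ _ _ _ _
    (fun o => if o is Some b then P b else q).
  rewrite card_option card_ord; apply; first by case.
  case=> [a|] [b|] //= ab.
  - by apply: sepP; apply: contra ab => /eqP ->.
  - by rewrite pdist_sym.
exists b => //; apply/dballP.
exists (fun t => if t == 0%N then P b ord_max else q ord_max); split => //.
split=> // i; rewrite ltnS leqn0 => /eqP -> /=.
by apply: le_trans (pdist_ge d (P b) q ord_max) _; rewrite leNgt; apply/negP.
Qed.

End MaximalFamilies.

Section LimnEsup.
Variable R : realType.
Local Open Scope ereal_scope.

Lemma limn_esupE (u : (\bar R)^nat) : limn_esup u = ereal_inf (range (esups u)).
Proof. by rewrite limn_esup_lim; apply/cvg_lim/cvg_esups_inf. Qed.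

Lemma limn_esup_ge (u : (\bar R)^nat) a N :
  (forall n, (N <= n)%N -> a <= u n) -> a <= limn_esup u.
Proof.
move=> le_au; rewrite limn_esupE; apply/ereal_infP => _ [k _ <-].
apply: le_trans (le_au (maxn N k) (leq_maxl _ _)) _.
by apply: ereal_sup_ubound; exists (maxn N k); rewrite /= ?leq_maxr.
Qed.

Lemma le_limn_esup (u v : (\bar R)^nat) :
  (forall n, u n <= v n) -> limn_esup u <= limn_esup v.
Proof.
move=> le_uv; rewrite !limn_esupE; apply/ereal_infP => _ [k _ <-].
apply: le_trans (ereal_inf_lbound _) _; first by exists k.
apply: ge_ereal_sup => _ [n le_kn <-].
by apply: le_trans (le_uv n) _; apply: ereal_sup_ubound; exists n.
Qed.

Lemma limn_esup_gt0 (u : (\bar R)^nat) : 0 < limn_esup u ->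
  exists2 h : R, (0 < h)%R & forall N, exists2 n, (N <= n)%N & h%:E < u n.
Proof.
move=> u_gt0; have [h h_gt0 lt_hu] : exists2 h : R, (0 < h)%R & h%:E < limn_esup u.
  case: (limn_esup u) u_gt0 => [r| |] //= r_gt0.
    by exists (r / 2)%R; move: r_gt0; rewrite ?lte_fin => r_gt0; lra.
  by exists 1%R; rewrite ?ltry.
exists h => // N; have : h%:E < esups u N.
  by apply: lt_le_trans lt_hu _; rewrite limn_esupE; apply: ereal_inf_lbound; exists N.
by move=> /ereal_sup_gt [_ [n le_Nn <-] lt_hn]; exists n.
Qed.

Lemma elog_le (a b : \bar R) : a <= b -> elog a <= elog b.
Proof.
case: a => [a| |]; case: b => [b| |] //=; rewrite ?leNye //.
- rewrite lee_fin => le_ab; case: ifP => a_gt0; case: ifP => b_gt0;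
    rewrite ?leNye //.
    by rewrite lee_fin ler_ln // posrE.
  by move: b_gt0; rewrite (lt_le_trans a_gt0 le_ab).
- by move=> _; case: ifP; rewrite ?leey ?leNye.
Qed.

Lemma elog_natX (K j : nat) : (0 < K)%N ->
  elog ((K ^ j)%N%:R)%:E = (j%:R * ln (K%:R : R))%:E.
Proof.
move=> K_gt0 /=; rewrite natrX ifT; last by rewrite exprn_gt0 // ltr0n.
by rewrite lnXn ?ltr0n // mulr_natl.
Qed.

End LimnEsup.

Lemma content_cover_ord_le (R : realType) (dsp : measure_display)
    (T : semiRingOfSetsType dsp) (mu : {content set T -> \bar R})
    K (A : set T) (F : 'I_K -> set T) (c : R) :
  measurable A -> (forall b, measurable (F b)) ->
  A `<=` \bigcup_b F b -> (forall b, (mu (F b) <= c%:E)%E) ->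
  (mu A <= (K%:R * c)%:E)%E.
Proof.
move=> mA mF AF le_Fc.
pose G k := if insub k is Some b then F b else set0.
have GE (b : 'I_K) : G b = F b by rewrite /G valK.
have mG k : measurable (G k) by rewrite /G; case: insub.
have AG : A `<=` \big[setU/set0]_(k < K) G k.
  by move=> y /AF [b _ Fby]; rewrite (bigD1 b) //= GE; left.
apply: le_trans (content_subadditive mu (fun k _ => mG k) mA AG) _.
apply: (@le_trans _ _ (\sum_(k < K) c%:E)%E); first by apply: lee_sum => k _; rewrite GE.
by rewrite sumEFin sumr_const card_ord mulr_natl.
Qed.

Definition sep_growth (R : realType) (X : Type) (d : X -> X -> R) (x : X)
    (delta Rs : R) : \bar R :=
  limn_esup (fun n : nat => ((n%:R)^-1)%:E * elog (sep_count d n Rs delta x))%E.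

Section SeparatedGrowth.
Variables (R : realType) (X : Type) (d : X -> X -> R) (x : X).
Hypothesis d_metric : is_metric d.

Lemma nonincreasing_sep_growth delta :
  {homo sep_growth d x delta : Rs Rs' / Rs <= Rs' >-> (Rs' <= Rs)%E}.
Proof.
move=> Rs Rs' le_Rs; apply: le_limn_esup => n.
apply: lee_wpmul2l; first by rewrite lee_fin invr_ge0.
apply/elog_le/ereal_sup_le => _ [K [P [hP sepP]] <-].
exists K => //; exists P; split => // i j /sepP; exact: le_lt_trans.
Qed.

Lemma lim_sep_growth delta :
  lim (sep_growth d x delta Rs @[Rs --> +oo]) = ereal_inf (range (sep_growth d x delta)).
Proof. by apply/cvg_lim/nonincreasing_cvge/nonincreasing_sep_growth. Qed.

Lemma sep_growth_ge_family delta Rs y0 L K (B : 'I_K -> nat -> X) :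
  0 <= delta -> Defs.dcomp d delta x y0 -> (0 < L)%N -> (0 < K)%N ->
  (forall b, npath d delta L y0 (B b)) ->
  (forall a b, a != b -> nsep d L Rs (B a) (B b)) ->
  ((ln (K%:R : R) / (8 * L)%:R)%:E <= sep_growth d x delta Rs)%E.
Proof.
move=> delta_ge0 /dcompP [m [g [hg gm]]] L_gt0 K_gt0 hB sepB.
apply: (@limn_esup_ge _ _ _ (m + m + 4 * L)%N) => n le_n.
set j := ((n - m) %/ (L + L))%N.
have [le_mn le_n8Lj] : (m + (L + L) * j <= n)%N /\ (n <= 8 * L * j)%N.
  have := leq_trunc_div (n - m) (L + L).
  have := @ltn_ceil (n - m) (L + L) ltac:(lia).
  rewrite -/j; nia.
have n_gt0 : (0 < n)%N by lia.
apply: le_trans (lee_wpmul2l _ (elog_le (sep_count_ge_pow d_metric delta_ge0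
  hg gm hB sepB le_mn))); last by rewrite lee_fin invr_ge0.
rewrite elog_natX // -EFinM lee_fin mulrA [ln _ / _]mulrC.
apply: ler_wpM2r; first by rewrite ln_ge0 // ler1n.
rewrite mulrC ler_pdivlMr ?ltr0n // mulrC ler_pdivrMr ?ltr0n ?muln_gt0 //.
by rewrite -natrM ler_nat mulnC.
Qed.

End SeparatedGrowth.

Section VolumeGrowth.
Variables (R : realType) (dsp : measure_display) (X : measurableType dsp)
  (d : X -> X -> R) (mu : {measure set X -> \bar R}) (x : X).
Hypothesis d_metric : is_metric d.
Hypothesis dball_measurable : forall (delta : R) (x0 : X) (l : nat),
  0 < delta -> measurable (dball d delta x0 l).
Hypothesis vol_lty : forall (delta : R) (l : nat), 0 < delta ->
  (vol d mu delta x l < +oo)%E.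

Lemma measure_le_vol delta y l : Defs.dcomp d delta x y ->
  (mu (dball d delta y l) <= vol d mu delta x l)%E.
Proof. by move=> xy; apply: ereal_sup_ubound; exists y. Qed.

Lemma vol_fin delta l : 0 < delta ->
  exists2 v : R, 0 <= v & vol d mu delta x l = v%:E.
Proof.
move=> delta_gt0; have := vol_lty l delta_gt0.
have := le_trans (measure_ge0 mu _) (measure_le_vol l (dcomp_refl d delta x)).
by case: (vol d mu delta x l) => [v| |] //= v_ge0 _; exists v.
Qed.

(* A ball B_delta(y0, L) of large measure forces many separated paths: the
   [Rs]-neighbourhoods of the endpoints of a maximal family cover it, and
   each has measure at most vol_Rs(1). *)
Lemma sep_family_measure_bound delta Rs y0 L V : 0 < delta -> delta <= Rs ->
  Defs.dcomp d delta x y0 -> 1 <= V -> (vol d mu Rs x 1 <= V%:E)%E ->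
  exists K (B : 'I_K -> nat -> X),
    [/\ forall b, npath d delta L y0 (B b),
        forall a b, a != b -> nsep d L Rs (B a) (B b) &
        (mu (dball d delta y0 L) <= (K%:R * V)%:E)%E].
Proof.
move=> delta_gt0 le_dRs xy0 V_ge1 volV.
have Rs_ge0 : 0 <= Rs by apply: ltW; apply: lt_le_trans le_dRs.
have [w _ volw] := vol_fin L delta_gt0.
have mu_le_w : (mu (dball d delta y0 L) <= w%:E)%E.
  by rewrite -volw; apply: measure_le_vol.
case: (maximal_or_all (sep_family0 d L Rs delta y0)) => [all_K|[K sepK not_sepK]].
  have [B [hB sepB]] := sep_familyP Rs_ge0 (all_K (Num.trunc w).+1).
  exists (Num.trunc w).+1, B; split => //; apply: le_trans mu_le_w _.
  rewrite lee_fin; apply: le_trans (ltW (truncnS_gt w)) _.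
  by rewrite ler_peMr.
have [B [hB sepB]] := sep_familyP Rs_ge0 sepK.
exists K, B; split => //; case: sepK => P [hP sepP].
apply: content_cover_ord_le (maximal_sep_family_cover d_metric hP sepP not_sepK) _.
- exact: dball_measurable.
- by move=> b; apply: dball_measurable; apply: lt_le_trans le_dRs.
- move=> b; apply: le_trans volV; apply: measure_le_vol.
  exact: le_dcomp le_dRs _ (dcomp_dpath_end xy0 (hP b)).
Qed.

Definition exp_ball_growth (delta0 h : R) := forall N, exists2 l, (N <= l)%N &
  exists2 x0, Defs.dcomp d delta0 x x0 &
    ((expR (h * l%:R))%:E < mu (dball d delta0 x0 l))%E.

Lemma vol_exp_growth delta0 : 0 < delta0 ->
  (0 < limn_esup (fun l : nat => ((l%:R)^-1)%:E * elog (vol d mu delta0 x l)))%E ->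
  exists2 h : R, 0 < h & exp_ball_growth delta0 h.
Proof.
move=> delta0_gt0 /limn_esup_gt0 [h h_gt0 often]; exists h => // N.
have [l le_l lt_hl] := often (maxn N 1); exists l; first exact: leq_trans (leq_maxl _ _) le_l.
have l_gt0 : (0 < l)%N by apply: leq_trans (leq_maxr _ _) le_l.
have [v _ volv] := vol_fin l delta0_gt0.
move: lt_hl; rewrite volv /=; case: ifP => [v_gt0|_]; last first.
  by rewrite mulrNy gtr0_sg ?invr_gt0 ?ltr0n // mul1e.
rewrite -EFinM lte_fin [_^-1 * _]mulrC ltr_pdivlMr ?ltr0n // => lt_hl.
have : ((expR (h * l%:R))%:E < vol d mu delta0 x l)%E.
  by rewrite volv lte_fin -[X in _ < X]lnK ?posrE // ltr_expR.
by move=> /ereal_sup_gt [_ [x0 xx0 <-] lt_mu]; exists x0.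
Qed.

Lemma exp_ball_growth_sep_family delta0 h k delta Rs V :
  0 < delta0 -> exp_ball_growth delta0 h ->
  (0 < k)%N -> k%:R * delta0 <= delta -> delta <= Rs ->
  1 <= V -> (vol d mu Rs x 1 <= V%:E)%E ->
  forall N, exists2 l, (N <= l)%N & exists2 x0, Defs.dcomp d delta x x0 &
    exists K (B : 'I_K -> nat -> X),
      [/\ forall b, npath d delta (l %/ k).+1 x0 (B b),
          forall a b, a != b -> nsep d (l %/ k).+1 Rs (B a) (B b) &
          expR (h * l%:R) < K%:R * V].
Proof.
move=> delta0_gt0 growth k_gt0 le_kd le_dRs V_ge1 volV N.
have le_d0d : delta0 <= delta.
  by apply: le_trans le_kd; rewrite ler_peMl ?ler1n // ltW.
have delta_gt0 : 0 < delta by apply: lt_le_trans le_d0d.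
have [l le_l [x0 xx0 lt_mu]] := growth N.
have xx0' := le_dcomp le_d0d xx0.
have [K [B [hB sepB muK]]] :=
  sep_family_measure_bound (l %/ k).+1 delta_gt0 le_dRs xx0' V_ge1 volV.
exists l => //; exists x0 => //; exists K, B; split => //.
rewrite -lte_fin; apply: lt_le_trans lt_mu (le_trans _ muK).
apply: le_measure; rewrite ?inE; [exact: dball_measurable..|].
exact: dball_subsample (ltW delta0_gt0) le_kd.
Qed.

Lemma sep_growth_ge_scale delta0 h k delta Rs :
  0 < delta0 -> 0 < h -> exp_ball_growth delta0 h ->
  (0 < k)%N -> k%:R * delta0 <= delta -> delta <= Rs ->
  ((h * k%:R / 32)%:E <= sep_growth d x delta Rs)%E.
Proof.
move=> delta0_gt0 h_gt0 growth k_gt0 le_kd le_dRs.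
have delta_gt0 : 0 < delta by apply: lt_le_trans le_kd; rewrite mulr_gt0 ?ltr0n.
have [v v_ge0 volv] := vol_fin 1 (lt_le_trans delta_gt0 le_dRs).
pose V := v + 1; have V_ge1 : 1 <= V by rewrite lerDr.
have volV : (vol d mu Rs x 1 <= V%:E)%E by rewrite volv lee_fin lerDl.
have lnV_ge0 : 0 <= ln V by rewrite ln_ge0.
have [l le_l [x0 xx0 [K [B [hB sepB lt_expK]]]]] :=
  exp_ball_growth_sep_family delta0_gt0 growth k_gt0 le_kd le_dRs V_ge1 volV
    (Num.trunc (2 * ln V / h + k%:R)).+1.
(* [l] is taken so large that [ln V] and [k] are negligible against [l] *)
have lt_hl : 2 * ln V + h * k%:R < h * l%:R.
  have : 2 * ln V / h + k%:R < l%:R.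
    by apply: lt_le_trans (truncnS_gt _) _; rewrite ler_nat.
  by rewrite -(ltr_pM2l h_gt0) mulrDr mulrCA mulfV ?mulr1 // gt_eqF.
have K_gt0 : (0 < K)%N.
  rewrite lt0n; apply/eqP => K0; move: lt_expK; rewrite K0 mul0r.
  by rewrite ltNge ltW ?expR_gt0.
have lt_lnK : h * l%:R - ln V < ln (K%:R : R).
  have KV_gt0 : 0 < K%:R * V := lt_trans (expR_gt0 _) lt_expK.
  rewrite ltrBlDr -lnM ?posrE ?ltr0n ?(lt_le_trans ltr01 V_ge1) //.
  by rewrite -ltr_expR lnK ?posrE.
apply: le_trans (sep_growth_ge_family d_metric (ltW delta_gt0) xx0 _ K_gt0 hB sepB) => //.
have le_Lk : (l %/ k).+1%:R * k%:R <= l%:R + k%:R :> R.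
  by rewrite -natrM -natrD ler_nat mulSn addnC leq_add2r leq_trunc_div.
rewrite lee_fin ler_pdivlMr ?ltr0n ?muln_gt0 // natrM.
have : h * ((l %/ k).+1%:R * k%:R) <= h * l%:R + h * k%:R.
  by rewrite -mulrDr ler_pM2l.
have -> : h * k%:R / 32 * (8 * (l %/ k).+1%:R) = h * ((l %/ k).+1%:R * k%:R) / 4.
  by field.
have : 0 <= h * k%:R by rewrite mulr_ge0 // ltW.
lra.
Qed.

Lemma lim_sep_growth_ge_scale delta0 h k delta :
  0 < delta0 -> 0 < h -> exp_ball_growth delta0 h ->
  (0 < k)%N -> k%:R * delta0 <= delta ->
  ((h * k%:R / 32)%:E <= lim (sep_growth d x delta Rs @[Rs --> +oo%R]))%E.
Proof.
move=> delta0_gt0 h_gt0 growth k_gt0 le_kd.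
rewrite lim_sep_growth; apply/ereal_infP => _ [Rs _ <-].
have ge_scale := sep_growth_ge_scale delta0_gt0 h_gt0 growth k_gt0 le_kd.
have [le_dRs|lt_Rsd] := leP delta Rs; first exact: ge_scale.
exact: le_trans (ge_scale _ (lexx delta)) (nonincreasing_sep_growth d x delta (ltW lt_Rsd)).
Qed.

End VolumeGrowth.

Unset Implicit Arguments.
Theorem mainTheorem13 (R : realType) (dsp : measure_display)
  (X : measurableType dsp) (d : X -> X -> R)
  (mu : {measure set X -> \bar R}) (x : X) :
  is_metric d ->
  (@measurable dsp X = <<s [set A | dopen d A] >>) ->
  (forall (delta : R) (x0 : X) (l : nat), 0 < delta ->
     measurable (dball d delta x0 l)) ->
  (forall (delta : R) (l : nat), 0 < delta -> (vol d mu delta x l < +oo)%E) ->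
  (exists delta0 : R, 0 < delta0 /\
     (0 < limn_esup (fun l : nat => ((l%:R)^-1)%:E * elog (vol d mu delta0 x l)))%E) ->
  coarse_entropy d x = +oo%E.
Proof.
move=> d_metric _ dball_measurable vol_lty [delta0 [delta0_gt0 rate_gt0]].
have [h h_gt0 growth] := vol_exp_growth vol_lty delta0_gt0 rate_gt0.
apply/cvg_lim => //; apply/cvgeyPge => A.
pose k := (Num.trunc (32 * A / h)).+1.
have le_Ak : A <= h * k%:R / 32.
  rewrite ler_pdivlMr // mulrC [h * _]mulrC; apply: ltW.
  by rewrite -ltr_pdivrMr // truncnS_gt.
near=> delta.
have le_kd : k%:R * delta0 <= delta.
  by near: delta; apply: nbhs_pinfty_ge; exact: num_real.
apply: le_trans (lim_sep_growth_ge_scale d_metric dball_measurable vol_lty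
  delta0_gt0 h_gt0 growth (ltn0Sn _) le_kd).
by rewrite lee_fin.
Unshelve. all: by end_near.
Qed.
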